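(* An almost discrete (Tychonoff) space $X$ is Grothendieck if and only if $X$ is Lindelöf and $t(X)=\omega$.
   Context: A space is almost discrete if it has exactly one non-isolated point. $C_p(X)$ is the space of continuous real-valued functions on $X$ with the pointwise convergence topology. A space $Z$ is a $g$-space if every subset $A\subseteq Z$ such that every infinite subset of $A$ has an accumulation point in $Z$ has compact closure in $Z$. $X$ is Grothendieck if every subspace of $C_p(X)$ is a $g$-space. $t(X)$ denotes the tightness of $X$. *)

From HB Require Import structures.
From mathcomp Require Import all_boot all_order all_algebra.
From mathcomp Require Import all_classical all_reals all_analysis.
From mathcomp Require Import Rstruct Rstruct_topology.
Set Implicit Arguments. Unset Strict Implicit. Unset Printing Implicit Defensive.
Import Order.TTheory GRing.Theory Num.Theory.
Local Open Scope classical_set_scope.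
Local Open Scope ring_scope.

Notation RR := Rdefinitions.R.

Definition isolated_point {X : topologicalType} (x : X) : Prop := open [set x].

Definition almost_discrete (X : topologicalType) : Prop :=
  exists p : X, ~ isolated_point p /\ forall q : X, ~ isolated_point q -> q = p.

Definition is_tychonoff (X : topologicalType) : Prop :=
  @accessible_space X /\
  forall (x : X) (F : set X), closed F -> ~ F x ->
    exists f : X -> RR, continuous f /\ f x = 0 /\ (forall y, F y -> f y = 1).

Definition is_lindelof (X : topologicalType) : Prop :=
  forall (I : Type) (U : I -> set X), (forall i, open (U i)) ->
    \bigcup_(i in [set: I]) U i = [set: X] ->
    exists J : set I, countable J /\ \bigcup_(i in J) U i = [set: X].

(* t(X) = omega: tightness is the least infinite cardinal k such that every
   point in the closure of A is in the closure of some B <= A with |B| <= k;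
   so t(X) = omega means countable tightness. *)
Definition countably_tight (X : topologicalType) : Prop :=
  forall (A : set X) (x : X), closure A x ->
    exists B : set X, B `<=` A /\ countable B /\ closure B x.

Definition Cp (X : topologicalType) : set {ptws X -> RR} :=
  [set f | continuous (f : X -> RR)].

(* The subspace Z of T is a g-space: every A <= Z all of whose infinite subsets
   have an accumulation point in Z has compact closure in Z.  (Accumulation
   points, closures and compactness relative to the subspace Z are written out
   in terms of the ambient space T.) *)
Definition g_space_in (T : topologicalType) (Z : set T) : Prop :=
  forall A : set T, A `<=` Z ->
    (forall B : set T, B `<=` A -> infinite_set B ->
       exists z, Z z /\ limit_point B z) ->
    compact (closure A `&` Z).

Definition is_grothendieck (X : topologicalType) : Prop :=
  forall Z : set {ptws X -> RR}, Z `<=` @Cp X -> @g_space_in {ptws X -> RR} Z.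

Set Warnings "-notation-overridden,-ambiguous-paths,-notation-incompatible-prefix".
From HB Require Import structures.
From mathcomp Require Import all_boot all_order all_algebra.
From mathcomp Require Import all_classical all_reals all_analysis.
From mathcomp Require Import Rstruct Rstruct_topology.
From mathcomp Require Import lra.
Set Implicit Arguments. Unset Strict Implicit. Unset Printing Implicit Defensive.
Import Order.TTheory GRing.Theory Num.Theory.
Local Open Scope classical_set_scope.
Local Open Scope ring_scope.

(* Let p be the non-isolated point; X is Lindelöf exactly when every
   neighbourhood of p has countable complement.

   If X is Lindelöf and countably tight, let A <= Z <= C_p(X) be such that every
   infinite subset of A accumulates in Z.  Then A is pointwise bounded, so its
   closure lies in a compact product of intervals, and it remains to show that
   every g in the closure of A lies in Z.  Countable tightness makes g continuous
   at p; co-countability of the neighbourhoods of p then yields a countable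
   A' <= A approximating g on every finite set.  The functions in A' and g are
   all constant off one countable set S, so a diagonal sequence from A'
   converges to g everywhere and its accumulation point in Z must be g.

   Conversely, if no countable subset of E <= X accumulates at p, the
   indicators of the countable subsets of E form a subspace of C_p(X) in which
   every infinite set accumulates.  For E uncountable that subspace is not
   compact, so a Grothendieck space has E countable.  Taking for E the complement
   of an open neighbourhood of p gives Lindelöfness, and taking for E a set with
   p in its closure gives countable tightness. *)

Lemma countable_setU T (A B : set T) :
  countable A -> countable B -> countable (A `|` B).
Proof.
move=> cA cB.
have -> : A `|` B = \bigcup_(i in [set: bool]) (if i then A else B).
  apply/seteqP; split => x; first by case=> h; [exists true|exists false].
  by case=> -[] _ h; [left|right].
by apply: bigcup_countable => // -[].
Qed.

Lemma countable_subset T (A B : set T) : A `<=` B -> countable B -> countable A.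
Proof. by move=> AB; apply: sub_countable; exact: subset_card_le. Qed.

Lemma countable_enum T (Y : set T) (y0 : T) :
  countable Y -> Y y0 -> exists e : nat -> T, Y `<=` range e.
Proof.
move=> /pfcard_geP [->//|[f]] _; exists f => y Yy.
by have [n _ <-] := 'surj_f Yy; exists n.
Qed.

Lemma finite_range_recurrent T (a : nat -> T) : finite_set (range a) ->
  exists n0, forall N, exists2 n, (N <= n)%N & a n = a n0.
Proof.
move=> fin; apply: contrapT => nrec.
have late b : exists N, range a b -> forall n, (N <= n)%N -> a n <> b.
  apply: contrapT => nb.
  have [n0 _ an0] : range a b by apply: contrapT => nr; apply: nb; exists 0%N.
  apply: nrec; exists n0 => N; apply: contrapT => nN; apply: nb.
  by exists N => _ n Nn an; apply: nN; exists n => //; rewrite an an0.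
have [Nf HN] := choice late.
apply: infinite_nat; apply: (@sub_finite_set _ _ (\bigcup_(b in range a) `I_(Nf b))).
  move=> n _; exists (a n); first by exists n.
  by rewrite /=; case: (ltnP n (Nf (a n))) => // /(HN (a n) (ex_intro2 _ _ n I erefl)).
by apply: bigcup_finite => // b _; exact: finite_II.
Qed.

Lemma limit_point_range_often (T : topologicalType) (a : nat -> T) (z : T) (U : set T) :
  hausdorff_space T -> limit_point (range a) z -> nbhs z U ->
  forall N, exists2 n, (N <= n)%N & U (a n).
Proof.
move=> hT lz zU N.
set F := (a @` `I_N) `\ z.
have cF : closed F.
  have := (@accessible_finite_set_closed T).1 (@hausdorff_accessible T hT).
  by apply; exact/finite_setD/finite_image/finite_II.
have nF : nbhs z (~` F).
  by apply: open_nbhs_nbhs; split; [rewrite openC|move=> [_ /=]; apply].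
have [y [yz [n _ any] [Uy Fy]]] := lz _ (filterI zU nF).
exists n; last by rewrite any.
rewrite leqNgt; apply/negP => nN; apply: Fy; split; first by exists n.
by move=> /eqP; rewrite (negbTE yz).
Qed.

Lemma compact_infinite_limit_point (T : ptopologicalType) (K B : set T) :
  compact K -> B `<=` K -> infinite_set B -> exists t, K t /\ limit_point B t.
Proof.
move=> cK BK infB; apply: contrapT => nt.
have isol t : exists U : set T, K t -> [/\ open U, U t & forall y, B y -> U y -> y = t].
  apply: contrapT => nU; apply: nt; exists t; split.
    by apply: contrapT => nK; apply: nU; exists setT => /nK.
  move=> U; rewrite nbhsE => -[V [oV Vt] VU]; apply: contrapT => nex.
  apply: nU; exists V => _; split => // y By Vy; apply: contrapT => yt.
  by apply: nex; exists y; split => //; [apply/eqP|exact: VU].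
have [Uf HU] := choice isol.
have : cover_compact K by rewrite -(@compact_cover T).
move=> /(_ T K Uf) [t /HU []//|t Kt|D sD cov].
  by exists t => //; have [] := HU t Kt.
apply: infB; apply: (sub_finite_set _ (finite_fset D)) => y By.
have [t Dt Uty] := cov _ (BK _ By).
have Kt : K t by have := sD t Dt; rewrite inE.
by have [_ _ /(_ y By Uty) ->] := HU t Kt.
Qed.

Lemma natSinv_lt (e : RR) : 0 < e ->
  exists N : nat, forall n, (N <= n)%N -> n.+1%:R^-1 < e.
Proof.
move=> e0; exists (Num.truncn e^-1) => n Nn.
by rewrite invf_plt ?unfold_in //= -truncn_lt_nat ?invr_ge0 ?ltW.
Qed.

Lemma nat_gt (r : RR) : exists N : nat, forall n, (N <= n)%N -> r < n%:R.
Proof.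
exists (Num.truncn `|r|).+1 => n Nn.
by apply: (le_lt_trans (ler_norm r)); rewrite -truncn_lt_nat.
Qed.

Lemma continuous_at_ball (X : topologicalType) (f : X -> RR) (x : X) :
  f @ x --> f x -> forall e, 0 < e -> nbhs x [set y | `|f y - f x| < e].
Proof.
move=> cf e e0.
have fx : nbhs x (f @^-1` ball (f x) e) := cf _ (nbhsx_ballx (f x) _ e0).
by apply: filterS fx => y /=; rewrite /ball /= distrC.
Qed.

Lemma locally_constant_continuous_at (X : topologicalType) (f : X -> RR) (x : X) (V : set X) :
  nbhs x V -> (forall y, V y -> f y = f x) -> f @ x --> f x.
Proof.
move=> Vx fV U Ux; apply: filterS Vx => y Vy /=.
by rewrite (fV y Vy); exact: nbhs_singleton Ux.
Qed.

(* [compact_cover] is only available for pointed spaces. *)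
HB.instance Definition _ (X : topologicalType) :=
  isPointed.Build {ptws X -> RR} (fun _ => 0).

Section Pointwise.
Variable X : topologicalType.
Implicit Types (f g z : {ptws X -> RR}) (y : X).

Lemma ptws_hausdorff : hausdorff_space {ptws X -> RR}.
Proof. by apply: hausdorff_product => _; exact: Rhausdorff. Qed.

Lemma open_ptws_ball y (c e : RR) : open [set f : {ptws X -> RR} | `|f y - c| < e].
Proof.
have -> : [set f : {ptws X -> RR} | `|f y - c| < e] = proj y @^-1` ball c e.
  by apply/seteqP; split => f /=; rewrite /ball /= distrC.
by apply: open_comp (@ball_open _ RR^o c e) => f _; exact: proj_continuous.
Qed.

Lemma nbhs_ptws_ball z y (e : RR) : 0 < e ->
  nbhs z [set f : {ptws X -> RR} | `|f y - z y| < e].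
Proof.
by move=> e0; apply: open_nbhs_nbhs; split; [exact: open_ptws_ball|rewrite /= subrr normr0].
Qed.

Lemma nbhs_ptws_finite_ball g (t : nat -> X) n (e : RR) : 0 < e ->
  nbhs g [set f : {ptws X -> RR} | forall k, (k < n)%N -> `|f (t k) - g (t k)| < e].
Proof.
move=> e0; elim: n => [|n IH]; first by apply: filterS filterT => f _ k.
apply: filterS (filterI IH (nbhs_ptws_ball g (t n) e0)) => f [h1 h2] k.
by rewrite ltnS leq_eqVlt => /orP[/eqP -> //|kn]; exact: h1.
Qed.

Lemma closure_ptws_approx (A : set {ptws X -> RR}) g : closure A g ->
  forall (t : nat -> X) n (e : RR), 0 < e ->
  exists2 a, A a & forall k, (k < n)%N -> `|a (t k) - g (t k)| < e.
Proof.
move=> clg t n e e0.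
by have [a [Aa Ha]] := clg _ (nbhs_ptws_finite_ball g t n e0); exists a.
Qed.

End Pointwise.

Definition ptws_cvg_on (X : Type) (a : nat -> X -> RR) (Y : set X) (g : X -> RR) :=
  forall y, Y y -> forall e, 0 < e -> exists N, forall n, (N <= n)%N -> `|a n y - g y| < e.

Lemma ptws_cvg_on_diagonal (X : Type) (a : nat -> X -> RR) (t : nat -> X) (g : X -> RR) :
  (forall n k, (k < n.+1)%N -> `|a n (t k) - g (t k)| < n.+1%:R^-1) ->
  ptws_cvg_on a (range t) g.
Proof.
move=> close _ [k _ <-] e e0; have [N HN] := natSinv_lt e0.
exists (maxn N k) => n; rewrite geq_max => /andP[Nn kn].
by apply: lt_trans (close n k _) (HN n Nn); rewrite ltnS.
Qed.

Section AccumulatingFamily.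
Variables (X : topologicalType) (Z A : set {ptws X -> RR}).
Hypotheses (AZ : A `<=` Z)
  (accA : forall B, B `<=` A -> infinite_set B -> exists z, Z z /\ limit_point B z).

Lemma ptws_limit_in (a : nat -> {ptws X -> RR}) (Y : set X) (g : X -> RR) :
  (forall n, A (a n)) -> ptws_cvg_on a Y g ->
  exists z, Z z /\ forall y, Y y -> z y = g y.
Proof.
move=> Aa cvg.
have [/finite_range_recurrent [n0 rec]|inf] := pselect (finite_set (range a)).
  exists (a n0); split => [|y Yy]; first exact: AZ.
  apply: contrapT => /eqP; rewrite -subr_eq0 -normr_gt0 => d0.
  have [N HN] := cvg y Yy _ d0; have [n Nn ann0] := rec N.
  by have := HN n Nn; rewrite ann0 ltxx.
have [z [Zz lz]] := accA (fun _ '(ex_intro2 n _ an) => eq_ind _ A (Aa n) _ an) inf.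
exists z; split => // y Yy.
apply: contrapT => /eqP; rewrite -subr_eq0 -normr_gt0 => d0.
have d2 : 0 < `|z y - g y| / 2 by rewrite divr_gt0.
have [N HN] := cvg y Yy _ d2.
have [n Nn zn] := limit_point_range_often (@ptws_hausdorff X) lz (nbhs_ptws_ball z y d2) N.
have := HN n Nn; have : `|a n y - z y| < `|z y - g y| / 2 := zn.
have : `|z y - g y| <= `|a n y - z y| + `|a n y - g y|.
  by rewrite (distrC (a n y)); exact: ler_distD.
lra.
Qed.

Lemma ptws_bounded x : exists M : RR, forall a, A a -> `|a x| <= M.
Proof.
apply: contrapT => nM.
have big n : exists a, A a /\ n%:R < `|a x|.
  apply: contrapT => na; apply: nM; exists n%:R => a Aa.
  by rewrite leNgt; apply/negP => h; apply: na; exists a.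
have [a Ha] := choice big.
have [/finite_range_recurrent [n0 rec]|inf] := pselect (finite_set (range a)).
  have [N HN] := nat_gt `|a n0 x|; have [n Nn ann0] := rec N.
  by have := lt_trans (HN n Nn) (Ha n).2; rewrite ann0 ltxx.
have [z [Zz lz]] := accA (fun _ '(ex_intro2 n _ an) => eq_ind _ A (Ha n).1 _ an) inf.
have [N HN] := nat_gt (`|z x| + 1).
have [n Nn zn] := limit_point_range_often (@ptws_hausdorff X) lz (nbhs_ptws_ball z x ltr01) N.
have := HN n Nn; have := (Ha n).2; have : `|a n x - z x| < 1 := zn.
have : `|a n x| <= `|a n x - z x| + `|z x| by rewrite -[X in `|X|](subrK (z x)) ler_normD.
lra.
Qed.

End AccumulatingFamily.

Section CocountableNeighbourhoods.
Variables (X : topologicalType) (p : X).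
Hypothesis cocountable : forall U, nbhs p U -> countable (~` U).

(* Induction on n, pinning the first point to y.  A member of the subfamily
   pinned at p already works at every point outside the countable set Q, so only
   the subfamilies pinned at points of Q are needed. *)
Lemma countable_tuple_subfamily (I : Type) (G : I -> set X) (D0 : set I) :
  (forall i, D0 i -> G i p -> nbhs p (G i)) ->
  forall n (D : set I), D `<=` D0 ->
  (forall t : nat -> X, exists i, D i /\ forall k, (k < n)%N -> G i (t k)) ->
  exists C, [/\ C `<=` D, countable C &
    forall t : nat -> X, exists i, C i /\ forall k, (k < n)%N -> G i (t k)].
Proof.
move=> Gnbhs; elim=> [|n IH] D sD cover.
  have [i [Di _]] := cover (fun _ => p).
  by exists [set i]; split => [j ->//||t]; [exact: countable1|exists i].
have fix_head y : exists C, [/\ C `<=` D `&` [set i | G i y], countable C &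
    forall t : nat -> X, exists i, C i /\ forall k, (k < n)%N -> G i (t k)].
  apply: IH => [i [Di _]|t]; first exact: sD.
  have [i [Di Hi]] := cover (fun k => if k is k'.+1 then t k' else y).
  by exists i; split; [split => //; exact: (Hi 0%N)|move=> k kn; exact: (Hi k.+1)].
have [Cf HC] := choice fix_head.
set Q := (\bigcup_(i in Cf p) ~` G i) `|` [set p].
have cQ : countable Q.
  apply: countable_setU (countable1 p); have [sC cC _] := HC p.
  apply: bigcup_countable => // i /sC [Di Gip].
  by apply: cocountable; apply: Gnbhs => //; exact: sD.
exists (\bigcup_(y in Q) Cf y); split.
- by move=> i [y _ Ci]; have [/(_ i Ci) []] := HC y.
- by apply: bigcup_countable => // y _; have [] := HC y.
move=> t; have [[k [kn Qk]]|noQ] := pselect (exists k, (k < n.+1)%N /\ Q (t k)).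
  have [sC _ Ht] := HC (t k).
  have [i [Ci Hi]] := Ht (fun j => if (j < k)%N then t j else t j.+1).
  have [_ Gik] := sC _ Ci.
  exists i; split => [|j jn]; first by exists (t k).
  have [jk|] := ltnP j k; first by have := Hi j (leq_trans jk kn); rewrite jk.
  rewrite leq_eqVlt => /orP[/eqP <- //|]; case: j jn => // j jn kj.
  by have := Hi j jn; rewrite ltnNge -ltnS kj.
have [_ _ Ht] := HC p; have [i [Ci _]] := Ht t.
exists i; split => [|k kn]; first by exists p => //; right.
by apply: contrapT => nG; apply: noQ; exists k; split => //; left; exists i.
Qed.

Lemma countable_neq_at (f : X -> RR) :
  (forall e, 0 < e -> nbhs p [set x | `|f x - f p| < e]) ->
  countable [set x | f x != f p].
Proof.
move=> fp.
apply: (@countable_subset _ _ (\bigcup_(k in [set: nat]) ~` [set x | `|f x - f p| < k.+1%:R^-1])).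
  move=> x /= fx; have [N HN] : exists N : nat, forall n, (N <= n)%N -> n.+1%:R^-1 < `|f x - f p|.
    by apply: natSinv_lt; rewrite normr_gt0 subr_eq0.
  by exists N => //= h; have := lt_trans (HN N (leqnn N)) h; rewrite ltxx.
by apply: bigcup_countable => // k _; apply/cocountable/fp; rewrite invr_gt0 ltr0n.
Qed.

End CocountableNeighbourhoods.

Section ClosureOfAccumulatingFamily.
Variables (X : topologicalType) (p : X).
Hypotheses (cocountable : forall U, nbhs p U -> countable (~` U))
  (tight : countably_tight X).
Variables (Z A : set {ptws X -> RR}).
Hypotheses (ZC : Z `<=` @Cp X) (AZ : A `<=` Z)
  (accA : forall B, B `<=` A -> infinite_set B -> exists z, Z z /\ limit_point B z).
Variable g : {ptws X -> RR}.
Hypothesis clg : closure A g.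

Let Acont a : A a -> continuous (a : X -> RR).
Proof. by move=> Aa; exact: (ZC (AZ Aa)). Qed.

(* If g jumped at p, some countable P0 with p in its closure would witness the
   jump; a limit in Z of functions converging to g on P0 and at p would then
   be discontinuous at p. *)
Lemma closure_continuous_at (e : RR) : 0 < e -> nbhs p [set x | `|g x - g p| < e].
Proof.
move=> e0; apply: contrapT => ng.
set P := [set x | e <= `|g x - g p|].
have clP : closure P p.
  move=> B Bp; apply: contrapT => nPB; apply: ng; apply: filterS Bp => x Bx /=.
  by rewrite ltNge; apply/negP => h; apply: nPB; exists x.
have [P0 [sP0 [cP0 clP0]]] := tight clP.
have [t Ht] := @countable_enum _ _ p (countable_setU cP0 (countable1 p)) (or_intror erefl).
have approx n : exists a, A a /\
    forall k, (k < n.+1)%N -> `|a (t k) - g (t k)| < n.+1%:R^-1.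
  have [|a] := closure_ptws_approx clg t n.+1 (_ : 0 < n.+1%:R^-1) ; first by rewrite invr_gt0.
  by exists a.
have [a Ha] := choice approx.
have [z [Zz zg]] := ptws_limit_in AZ accA (fun n => (Ha n).1)
  (ptws_cvg_on_diagonal (fun n => (Ha n).2)).
have [x [P0x zx]] := clP0 _ (continuous_at_ball (@ZC z Zz p) e0).
have := sP0 _ P0x; rewrite /P /= -(zg x (Ht x (or_introl P0x))).
by rewrite -(zg p (Ht p (or_intror erefl))) => /le_lt_trans/(_ zx); rewrite ltxx.
Qed.

Lemma countable_approximating_subfamily : exists2 A', A' `<=` A /\ countable A' &
  forall m (t : nat -> X), exists a, A' a /\
    forall k, (k < m.+1)%N -> `|a (t k) - g (t k)| < m.+1%:R^-1.
Proof.
have Gnbhs m a : A a -> `|a p - g p| < m.+1%:R^-1 ->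
    nbhs p [set x | `|a x - g x| < m.+1%:R^-1].
  set r := m.+1%:R^-1 => Aa hp.
  have d0 : 0 < (r - `|a p - g p|) / 2 by rewrite divr_gt0 // subr_gt0.
  have ca := @Acont a Aa p.
  apply: filterS (filterI (continuous_at_ball ca d0) (closure_continuous_at d0)).
  move=> x [/= h1 h2].
  have : `|a x - g x| <= `|a x - a p| + `|a p - g x| := ler_distD _ _ _.
  have : `|a p - g x| <= `|a p - g p| + `|g p - g x| := ler_distD _ _ _.
  rewrite (distrC (g p)); lra.
have subfamily m : exists C, [/\ C `<=` A, countable C &
    forall t : nat -> X, exists a, C a /\
      forall k, (k < m.+1)%N -> `|a (t k) - g (t k)| < m.+1%:R^-1].
  apply: (@countable_tuple_subfamily X p cocountable _ _ A (Gnbhs m) m.+1 A) => // t.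
  have [|a Aa close] := closure_ptws_approx clg t m.+1 (_ : 0 < m.+1%:R^-1).
    by rewrite invr_gt0.
  by exists a.
have [Cm HCm] := choice subfamily.
exists (\bigcup_(m in [set: nat]) Cm m); last first.
  by move=> m t; have [_ _ /(_ t) [a [Ca close]]] := HCm m; exists a; split => //; exists m.
split; first by move=> a [m _ Cma]; have [sC _ _] := HCm m; exact: sC.
by apply: bigcup_countable => // m _; have [] := HCm m.
Qed.

Lemma closure_sub_space : Z g.
Proof.
have [A' [A'A cA'] approx] := countable_approximating_subfamily.
set S := ([set x | g x != g p] `|` \bigcup_(a in A') [set x | a x != a p]) `|` [set p].
have cS : countable S.
  apply: countable_setU (countable1 p); apply: countable_setU.
    exact: countable_neq_at cocountable _ closure_continuous_at.
  apply: bigcup_countable => // a A'a; apply: countable_neq_at cocountable _ _.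
  exact: continuous_at_ball (@Acont a (A'A _ A'a) p).
have [t Ht] := @countable_enum _ _ p cS (or_intror erefl).
have [a Ha] := choice (fun n => approx n t).
have cvg_t := ptws_cvg_on_diagonal (fun n => (Ha n).2).
have cvg : ptws_cvg_on a [set: X] g.
  move=> y _ e e0.
  have [/Ht ty|nSy] := pselect (S y); first exact: cvg_t.
  have [N HN] := cvg_t p (Ht p (or_intror erefl)) e e0.
  exists N => n Nn.
  have -> : g y = g p by apply/eqP; apply: contrapT => /negP h; apply: nSy; left; left.
  suff -> : a n y = a n p by exact: HN.
  by apply/eqP; apply: contrapT => /negP h; apply: nSy; left; right; exists (a n) => //; exact: (Ha n).1.
have [z [Zz zg]] := ptws_limit_in AZ accA (fun n => A'A _ (Ha n).1) cvg.
by have -> : g = z by apply: funext => y; rewrite zg.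
Qed.

End ClosureOfAccumulatingFamily.

Lemma grothendieck_of_cocountable_tight (X : topologicalType) (p : X) :
  (forall U, nbhs p U -> countable (~` U)) -> countably_tight X -> is_grothendieck X.
Proof.
move=> cocountable tight Z ZC A AZ accA.
have [M HM] := choice (ptws_bounded accA).
set K := [set f : {ptws X -> RR} | forall x, [set` `[- M x, M x]] (f x)].
have cK : compact K.
  exact: (@tychonoff X (fun _ => RR) (fun x => [set` `[- M x, M x]])
    (fun x => @segment_compact RR (- M x) (M x))).
have clAK : closure A `<=` K.
  rewrite (closure_id K).1; last exact: compact_closed (@ptws_hausdorff X) cK.
  by apply: closureS => a Aa x; rewrite /= in_itv /= -ler_norml; exact: HM.
rewrite setIidl => [|g clg]; last exact: (closure_sub_space cocountable tight ZC AZ accA clg).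
exact: subclosed_compact (@closed_closure _ A) cK clAK.
Qed.

Lemma lindelof_of_cocountable_open (X : topologicalType) (p : X) :
  (forall U, open U -> U p -> countable (~` U)) -> is_lindelof X.
Proof.
move=> cocountable I U oU cov.
have covered x : exists i, U i x.
  have : (\bigcup_(i in [set: I]) U i) x by rewrite cov.
  by case=> i _; exists i.
have [h Hh] := choice covered.
exists ([set h p] `|` h @` ~` U (h p)); split.
  apply: countable_setU (countable1 _) _.
  have cU := cocountable _ (oU _) (Hh p).
  by apply: sub_countable cU; exact: card_image_le.
apply/seteqP; split => // x _.
have [Ux|nUx] := pselect (U (h p) x); first by exists (h p) => //; left.
by exists (h x); [right; exists x|exact: Hh].
Qed.

Section AlmostDiscrete.
Variables (X : topologicalType) (p : X).
Hypothesis iso : forall q, q <> p -> isolated_point q.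

Lemma nbhs_isolated q : q <> p -> nbhs q [set q].
Proof. by move=> qp; apply: open_nbhs_nbhs; split => //; exact: iso. Qed.

Lemma lindelof_cocountable_nbhs : is_lindelof X -> forall U, nbhs p U -> countable (~` U).
Proof.
move=> L U; rewrite nbhsE => -[V [oV Vp] VU].
pose W x := if x == p then V else [set x].
have oW x : open (W x) by rewrite /W; case: eqP => // /iso.
have covW : \bigcup_(x in [set: X]) W x = [set: X].
  apply/seteqP; split => // y _; have [yV|nyV] := pselect (V y).
    by exists p; rewrite /W ?eqxx.
  by exists y; rewrite /W //; case: eqP => // yp; rewrite yp in nyV.
have [J [cJ HJ]] := L X W oW covW.
apply: countable_subset cJ => y nUy.
have : (\bigcup_(x in J) W x) y by rewrite HJ.
by case=> x Jx; rewrite /W; case: eqP => [_ /VU //|_ ->].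
Qed.

Lemma continuous_indic_of_not_closure (C : set X) :
  ~ closure C p -> continuous (\1_C : X -> RR).
Proof.
move=> nclC x; have [->|xp] := pselect (x = p); last first.
  by apply: (locally_constant_continuous_at (nbhs_isolated xp)) => y ->.
have [V Vp VC] : exists2 V, nbhs p V & forall y, V y -> ~ C y.
  apply: contrapT => nV; apply: nclC => V Vp; apply: contrapT => nCV.
  by apply: nV; exists V => // y Vy Cy; apply: nCV; exists y.
apply: (locally_constant_continuous_at Vp) => y Vy.
by rewrite !indicE (memNset (VC _ Vy)) (memNset (VC _ (nbhs_singleton Vp))).
Qed.

End AlmostDiscrete.

Definition countable_indicators (X : Type) (E : set X) : set {ptws X -> RR} :=
  [set f | exists2 C, C `<=` E /\ countable C & f = \1_C].

Lemma injective_range_infinite T (b : nat -> T) : injective b -> infinite_set (range b).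
Proof.
move=> binj /finite_range_recurrent [n0 rec]; have [n nn0 bn] := rec n0.+1.
by move: nn0; rewrite (binj _ _ bn) ltnn.
Qed.

(* Every infinite family of indicators lies, after passing to a sequence, in the
   compact set of {0,1}-valued functions supported in a fixed countable S. *)
Lemma limit_point_countable_indicators (X : topologicalType) (E : set X) (B : set {ptws X -> RR}) :
  B `<=` countable_indicators E -> infinite_set B ->
  exists t, countable_indicators E t /\ limit_point B t.
Proof.
move=> BE infB.
have [b [binj bB]] : exists b : nat -> {ptws X -> RR}, injective b /\ range b `<=` B.
  have [f] := card_leP ((infiniteP B).1 infB).
  exists (fun n => \val (f (to_setT n))); split.
    by move=> m n /val_inj /('inj_f) => /(_ (mem_set I) (mem_set I)) /(congr1 val).
  by move=> _ [n _ <-]; exact: set_valP.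
have indic_b n : exists C, (C `<=` E /\ countable C) /\ b n = \1_C.
  by have [C ? ?] := BE _ (bB _ (ex_intro2 _ _ n I erefl)); exists C.
have [Cn HCn] := choice indic_b.
set S := \bigcup_(n in [set: nat]) Cn n.
have SE : S `<=` E by move=> x [n _]; have [[sC _] _] := HCn n; exact: sC.
have cS : countable S by apply: bigcup_countable => // n _; have [[]] := HCn n.
set K := [set f : {ptws X -> RR} | forall x, [set r : RR | r = 0 \/ (S x /\ r = 1)] (f x)].
have cK : compact K.
  apply: (@tychonoff X (fun _ => RR) (fun x => [set r : RR | r = 0 \/ (S x /\ r = 1)])).
  move=> x; apply/finite_compact/(@sub_finite_set _ _ [set 0; 1]); last exact: finite_set2.
  by move=> r [->|[_ ->]]; [left|right].
have bK : range b `<=` K.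
  move=> _ [n _ <-] x; have [_ ->] := HCn n; rewrite indicE.
  have [Cx|nCx] := pselect (Cn n x); last by left; rewrite memNset.
  by right; split; [exists n|rewrite mem_set].
have [t [Kt lt]] := compact_infinite_limit_point cK bK (injective_range_infinite binj).
have t01 x : t x = 1 \/ t x = 0 /\ t x <> 1.
  have [t0|[_ t1]] := Kt x; last by left.
  by right; split => //; rewrite t0 => /eqP; rewrite eq_sym oner_eq0.
exists t; split; last first.
  by move=> U Ut; have [y [yt ry Uy]] := lt U Ut; exists y; split => //; exact: bB.
exists [set x | t x = 1]; first split.
- by move=> x /= tx; apply: SE; have [|[]//] := Kt x; rewrite tx => /eqP; rewrite oner_eq0.
- apply: countable_subset cS => x /= tx.
  by have [|[]//] := Kt x; rewrite tx => /eqP; rewrite oner_eq0.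
apply: funext => x; rewrite indicE.
have [tx|[tx ntx]] := t01 x.
  by rewrite (@mem_set _ [set x | t x = 1] x tx) tx.
by rewrite (@memNset _ [set x | t x = 1] x ntx) tx.
Qed.

Section GrothendieckAlmostDiscrete.
Variables (X : topologicalType) (p : X).
Hypotheses (iso : forall q, q <> p -> isolated_point q) (G : is_grothendieck X).

(* Cover the compact set of indicators by the open sets where a single coordinate
   x_t, chosen in E but outside the support of t, stays below 1/2. *)
Lemma countable_of_grothendieck (E : set X) :
  (forall C, C `<=` E -> countable C -> ~ closure C p) -> countable E.
Proof.
move=> far; apply: contrapT => nE.
set Zs := countable_indicators E.
have ZsC : Zs `<=` @Cp X.
  by move=> _ [C [CE cC] ->]; have := continuous_indic_of_not_closure iso (far _ CE cC).
have := G ZsC (@subset_refl _ Zs) (fun B BZs infB => limit_point_countable_indicators BZs infB).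
set K := closure Zs `&` Zs => cK.
have witness (t : {ptws X -> RR}) : exists x, K t -> E x /\ t x = 0.
  have [[_ [C [CE cC] ->]]|nK] := pselect (K t); last by exists p.
  have [x [Ex nCx]] : exists x, E x /\ ~ C x.
    apply: contrapT => nex; apply: nE; apply: countable_subset cC => x Ex.
    by apply: contrapT => nCx; apply: nex; exists x.
  by exists x => _; rewrite indicE memNset.
have [xf Hxf] := choice witness.
pose U t := [set f : {ptws X -> RR} | `|f (xf t) - t (xf t)| < 2^-1].
have : cover_compact K by rewrite -(@compact_cover {ptws X -> RR}).
move=> /(_ _ K U (fun t _ => open_ptws_ball _ _ _)) [t Kt|D DK cov].
  by exists t => //; rewrite /U /= subrr normr0 invr_gt0.
have fD := finite_fset D; move: fD cov; set Ds := (X in finite_set X) => fD cov.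
have KD t : Ds t -> K t by move=> /DK; rewrite inE.
set C := xf @` Ds.
have ZsC1 : Zs (\1_C).
  exists C => //; split; first by move=> _ [t Dt <-]; exact: (Hxf t (KD t Dt)).1.
  exact/finite_set_countable/finite_image.
have [t Dt] := cov _ (conj (subset_closure ZsC1) ZsC1).
rewrite /U /= indicE mem_set; last by exists t.
by rewrite (Hxf t (KD t Dt)).2 subr0 normr1; lra.
Qed.

Lemma lindelof_of_grothendieck : is_lindelof X.
Proof.
apply: (@lindelof_of_cocountable_open _ p) => U oU Up.
apply: countable_of_grothendieck => C CU _ clC.
by have [y [Cy Uy]] := clC U (open_nbhs_nbhs (conj oU Up)); exact: CU Cy Uy.
Qed.

Lemma countably_tight_of_grothendieck : countably_tight X.
Proof.
move=> B x clx; have [xp|xp] := pselect (x = p); last first.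
  have [y [By /= yx]] := clx _ (nbhs_isolated iso xp); subst y.
  by exists [set x]; split => [z ->//|]; split; [exact: countable1|exact: subset_closure].
subst x; have [//|nex] := pselect (exists C, C `<=` B /\ countable C /\ closure C p).
exists B; split => //; split => //.
by apply: countable_of_grothendieck => C CB cC clC; apply: nex; exists C.
Qed.

End GrothendieckAlmostDiscrete.

Theorem corollary1 (X : topologicalType) :
  is_tychonoff X -> almost_discrete X ->
  (is_grothendieck X <-> is_lindelof X /\ countably_tight X).
Proof.
move=> _ [p [_ unique_nonisolated]].
have iso q : q <> p -> isolated_point q.
  by move=> qp; apply: contrapT => nq; apply: qp; exact: unique_nonisolated.
split=> [G|[L T]].
  by split; [exact: lindelof_of_grothendieck iso G|exact: countably_tight_of_grothendieck iso G].
exact: grothendieck_of_cocountable_tight (lindelof_cocountable_nbhs iso L) T.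
Qed.
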